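(* In the setting below, let $p,q\in X$ with $|S_p\cap S_q|=1$, $|S_p|=2$ and $|S_q|=n$, and let $r\in X$ with $S_r\ne S_p$, $S_r\ne S_q$ and $|S_r|\ge 2$. Then either $S_r\subseteq S_q\setminus S_p$ or $S_r=(S_p\setminus S_q)\cup(S_q\setminus S_p)$.
   Context: Setting: $E=\{e_0,\dots,e_n\}\subset\mathbb R^n$ is the vertex set of an $n$-simplex with $e_0+\cdots+e_n=0$, and $X\subset\mathbb R^n\setminus\{0\}$ is a finite set with $E\subseteq X$, no element of $X$ a positive multiple of another, such that every $n+1$ points of $X$ are in good position. (A finite set $A$ is in conical position if $0\notin\operatorname{conv}A$ and no point of $A$ lies in the positive hull—set of nonnegative linear combinations—of the other points; it is in good position otherwise.) For $p\in X$, the support $S_p$ is the minimal subset of $E$ whose positive hull contains $p$. *)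

From HB Require Import structures.
From mathcomp Require Import all_boot all_order all_algebra.
From mathcomp Require Import finmap.
From mathcomp Require Import reals.
Set Implicit Arguments. Unset Strict Implicit. Unset Printing Implicit Defensive.
Import Order.TTheory GRing.Theory Num.Theory.
Local Open Scope ring_scope.
Local Open Scope fset_scope.

Section Defs.
Variables (R : realType) (n : nat).
Notation vec := 'rV[R]_n.

Definition affinely_independent (m : nat) (e : 'I_m -> vec) : Prop :=
  forall c : 'I_m -> R, \sum_(i < m) c i = 0 -> \sum_(i < m) c i *: e i = 0 ->
    forall i, c i = 0.

Definition in_conv (A : {fset vec}) (x : vec) : Prop :=
  exists c : vec -> R, (forall a, a \in A -> 0 <= c a) /\
    \sum_(a <- A) c a = 1 /\ \sum_(a <- A) c a *: a = x.

Definition in_pos (A : {fset vec}) (x : vec) : Prop :=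
  exists c : vec -> R, (forall a, a \in A -> 0 <= c a) /\
    \sum_(a <- A) c a *: a = x.

Definition conical_position (A : {fset vec}) : Prop :=
  ~ in_conv A 0 /\ forall a, a \in A -> ~ in_pos (A `\ a) a.

Definition good_position (A : {fset vec}) : Prop := ~ conical_position A.

Definition in_pos_idx (e : 'I_n.+1 -> vec) (S : {set 'I_n.+1}) (x : vec) : Prop :=
  exists c : 'I_n.+1 -> R, (forall i, 0 <= c i) /\ \sum_(i in S) c i *: e i = x.

Definition is_support (e : 'I_n.+1 -> vec) (p : vec) (S : {set 'I_n.+1}) : Prop :=
  in_pos_idx e S p /\ forall S' : {set 'I_n.+1}, S' \proper S -> ~ in_pos_idx e S' p.

Definition setting (e : 'I_n.+1 -> vec) (X : {fset vec}) : Prop :=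
  [/\ affinely_independent e,
      \sum_(i < n.+1) e i = 0,
      (forall i, e i \in X),
      0 \notin X
    & (forall x y t, x \in X -> y \in X -> 0 < t -> x = t *: y -> x = y)] /\
  (forall A : {fset vec}, A `<=` X -> #|` A| = n.+1 -> good_position A).

End Defs.

From HB Require Import structures.
From mathcomp Require Import all_boot all_order all_algebra.
From mathcomp Require Import finmap.
From mathcomp Require Import reals.
From mathcomp Require Import ring lra zify.
Import Order.TTheory GRing.Theory Num.Theory.
Set Implicit Arguments. Unset Strict Implicit. Unset Printing Implicit Defensive.
Local Open Scope ring_scope.

(* Proposition 6.10.  Every point is written x = \sum_i c_i e_i; since the
   e_i are affinely independent and sum to 0, these coordinates are unique up
   to an additive constant, and the support S_x is the set of indices where the
   coordinates normalized to vanish off the support are positive.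
   The only geometric input is good position: n+1 points of X whose linear
   relations are all multiples of one vector with two positive and two negative
   entries would be in conical position.  We apply this to pair families, the
   vertices with e_u and e_v replaced by points x and y of X, whose relation is
   computed from the coordinates of x and y (pair_relation).  Writing
   S_p = {a, b} and S_q = E \ {b}, such sign arguments show that S_r cannot
   properly contain {a, b}, and that if S_r meets {a, b} in a single point then
   S_r contains all indices but the other point.  The theorem follows by a case
   analysis on whether a and b belong to S_r. *)

Lemma sum_delta (R : pzRingType) (T : finType) (V : lmodType R) (F : T -> V) k :
  \sum_j ((j == k)%:R : R) *: F j = F k.
Proof.
rewrite (bigD1 k) //= eqxx scale1r big1 ?addr0 // => j /negbTE ->.
by rewrite scale0r.
Qed.

Lemma exists_other (T : finType) (S : {set T}) z :
  (2 <= #|S|)%N -> exists2 t, t \in S & t != z.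
Proof.
move=> cardS; case/boolP: (S \subset [set z]) => [/subset_leq_card | /subsetPn [t tS]].
  by rewrite cards1 => /(leq_trans cardS).
by rewrite inE; exists t.
Qed.

Lemma subset_setC1 (T : finType) (A : {set T}) x : x \notin A -> A \subset [set~ x].
Proof. by move=> xA; apply/subsetP => y yA; rewrite in_setC1; apply: contraNneq xA => <-. Qed.

Lemma pair_meets_hyperface n (Sp Sq : {set 'I_n.+1}) :
  #|Sp :&: Sq| = 1%N -> #|Sp| = 2%N -> #|Sq| = n ->
  exists a b, [/\ a != b, Sp = [set a; b] & Sq = [set~ b]].
Proof.
move=> cPQ cP cQ.
have [b Cb] : exists b, ~: Sq = [set b].
  by apply/cards1P; have := cardsC Sq; rewrite cQ card_ord; lia.
have SqE : Sq = [set~ b] by rewrite -Cb setCK.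
have bP : b \in Sp.
  apply: contraT => bP; move: cPQ; rewrite (setIidPl _) ?cP //.
  by apply/subsetP => i iP; rewrite SqE in_setC1; apply: contraNneq bP => <-.
have [a Ea] : exists a, Sp :\ b = [set a].
  by apply/cards1P; have := cardsD1 b Sp; rewrite bP cP; lia.
exists a, b; split => //; last by rewrite -(setD1K bP) Ea setUC.
have : a \in Sp :\ b by rewrite Ea set11.
by rewrite in_setD1 => /andP [].
Qed.

Section Coordinates.
Variables (R : realType) (n : nat) (e : 'I_n.+1 -> 'rV[R]_n).
Hypotheses (e_indep : affinely_independent e) (e_sum0 : \sum_(i < n.+1) e i = 0).

Lemma coords_const (d : 'I_n.+1 -> R) :
  \sum_i d i *: e i = 0 -> forall i j, d i = d j.
Proof.
move=> d0.
pose m := (\sum_i d i) / n.+1%:R.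
have sum_shift : \sum_i (d i - m) = 0.
  by rewrite sumrB sumr_const card_ord -mulr_natr divfK ?subrr ?pnatr_eq0.
have comb_shift : \sum_i (d i - m) *: e i = 0.
  under eq_bigr do rewrite scalerBl.
  by rewrite sumrB d0 -scaler_sumr e_sum0 scaler0 subrr.
have shift0 : forall i, d i - m = 0 := e_indep sum_shift comb_shift.
by move=> i j; rewrite -[d i](subrK m) -[d j](subrK m) !shift0.
Qed.

Definition support_coords (x : 'rV[R]_n) (S : {set 'I_n.+1}) (c : 'I_n.+1 -> R) :=
  [/\ forall i, i \in S -> 0 < c i, forall i, i \notin S -> c i = 0
    & x = \sum_i c i *: e i].

(* By minimality, the coefficients of x on its support are all positive. *)
Lemma support_coordsP x S : is_support e x S -> exists c, support_coords x S c.
Proof.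
case=> [[c [c_ge0 xE]] S_min]; exists (fun i => if i \in S then c i else 0); split.
- move=> i iS; rewrite iS lt_def c_ge0 andbT; apply/eqP => ci0.
  apply: (S_min (S :\ i)); first by rewrite properD1.
  exists c; split => //; rewrite -xE [RHS](bigD1 i) //= ci0 scale0r add0r.
  by apply: eq_bigl => j; rewrite in_setD1 andbC.
- by move=> i /negbTE ->.
- rewrite -xE big_mkcond /=; apply: eq_bigr => i _.
  by case: (i \in S) => //; rewrite scale0r.
Qed.

(* Subtracting the least coefficient shows that no point is supported on all
   of E, since the vertices sum to 0. *)
Lemma support_proper x S : is_support e x S -> S != setT.
Proof.
case=> [[c [c_ge0 xE]] S_min]; apply/negP => /eqP ST.
have [i0 _ c_min] := @arg_minP _ R _ ord0 xpredT c isT.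
apply: (S_min (setT :\ i0)); first by rewrite ST properD1 ?in_setT.
exists (fun i => c i - c i0); split; first by move=> i; rewrite subr_ge0 c_min.
transitivity (\sum_i (c i - c i0) *: e i).
  rewrite [RHS](bigD1 i0) //= subrr scale0r add0r.
  by apply: eq_bigl => i; rewrite in_setD1 in_setT andbT.
under eq_bigr do rewrite scalerBl.
rewrite sumrB -scaler_sumr e_sum0 scaler0 subr0 -xE ST.
by apply: eq_bigl => i; rewrite in_setT.
Qed.

Definition pair_family (x y : 'rV[R]_n) (u v j : 'I_n.+1) : 'rV[R]_n :=
  if j == u then x else if j == v then y else e j.

Lemma pair_family_combination x y cx cy u v (mu : 'I_n.+1 -> R) :
  x = \sum_i cx i *: e i -> y = \sum_i cy i *: e i -> u != v ->
  \sum_j mu j *: pair_family x y u v j =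
  \sum_i (mu u * cx i + mu v * cy i + (if (i != u) && (i != v) then mu i else 0)) *: e i.
Proof.
move=> -> -> uv; rewrite /pair_family (bigD1 u) // (bigD1 v) /=; last by rewrite eq_sym.
rewrite eqxx (negbTE (_ : v != u)) 1?eq_sym // eqxx.
under [in RHS]eq_bigr do rewrite !scalerDl -!scalerA.
rewrite !big_split /= -!scaler_sumr addrA; congr (_ + _).
rewrite big_mkcond /=; apply: eq_bigr => i _.
by case: ifP => [/andP[/negbTE -> /negbTE ->] | ] //; rewrite scale0r.
Qed.

(* The (up to scaling unique) linear relation of the pair family, written with
   the coordinate differences X = cx - cx v and Y = cy - cy v. *)
Definition pair_relation (cx cy : 'I_n.+1 -> R) (u v j : 'I_n.+1) : R :=
  if j == u then cy u - cy v
  else if j == v then cx v - cx u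
  else (cx u - cx v) * (cy j - cy v) - (cy u - cy v) * (cx j - cx v).

Lemma pair_relation_u cx cy u v : pair_relation cx cy u v u = cy u - cy v.
Proof. by rewrite /pair_relation eqxx. Qed.

Lemma pair_relation_v cx cy u v : u != v -> pair_relation cx cy u v v = cx v - cx u.
Proof. by rewrite /pair_relation eq_sym => /negbTE ->; rewrite eqxx. Qed.

Lemma pair_relation_other cx cy u v j : j != u -> j != v ->
  pair_relation cx cy u v j =
  (cx u - cx v) * (cy j - cy v) - (cy u - cy v) * (cx j - cx v).
Proof. by rewrite /pair_relation => /negbTE -> /negbTE ->. Qed.

Lemma pair_relations x y cx cy u v (mu : 'I_n.+1 -> R) :
  x = \sum_i cx i *: e i -> y = \sum_i cy i *: e i -> u != v -> cx u != cx v ->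
  \sum_j mu j *: pair_family x y u v j = 0 ->
  exists t, forall j, mu j = t * pair_relation cx cy u v j.
Proof.
move=> xE yE uv cuv; rewrite (pair_family_combination mu xE yE uv) => rel.
have /(_ _ v) coordsE := coords_const rel; rewrite /= eqxx andbF addr0 in coordsE.
have := coordsE u; rewrite eqxx /= addr0 => coords_u.
have coords_j j : j != u -> j != v -> mu j = - mu v * (cy j - cy v) - mu u * (cx j - cx v).
  by move=> ju jv; have := coordsE j; rewrite ju jv /=; lra.
have Xu0 : cx u - cx v != 0 by rewrite subr_eq0.
pose t := - mu v / (cx u - cx v).
have tX : t * (cx u - cx v) = - mu v by rewrite divfK.
have tY : t * (cy u - cy v) = mu u.
  apply: (mulIf Xu0); rewrite mulrAC tX; lra.
exists t => j; rewrite /pair_relation; case: eqVneq => [-> //|ju].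
case: eqVneq => [->|jv]; first by rewrite -opprB mulrN tX opprK.
by rewrite coords_j // [RHS]mulrBr 2!mulrA tX tY; ring.
Qed.

End Coordinates.

Definition two_signs (R : numDomainType) (m : nat) (lam : 'I_m -> R) : Prop :=
  (exists i k, [/\ i != k, 0 < lam i & 0 < lam k]) /\
  (exists i k, [/\ i != k, lam i < 0 & lam k < 0]).

Section UniqueRelation.
Variables (R : realType) (n m : nat) (f : 'I_m -> 'rV[R]_n) (lam : 'I_m -> R).
Hypothesis f_relations : forall mu : 'I_m -> R,
  \sum_j mu j *: f j = 0 -> exists t, forall j, mu j = t * lam j.
Hypothesis lam_signs : two_signs lam.

(* Any nonzero multiple of lam has two negative entries, so a relation of f
   that is nonnegative except at a single index vanishes. *)
Lemma relation_one_negative (mu : 'I_m -> R) l :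
  \sum_j mu j *: f j = 0 -> (forall j, j != l -> 0 <= mu j) -> forall j, mu j = 0.
Proof.
move=> /f_relations [t mu_t] mu_pos j; case: (eqVneq (mu j) 0) => // mu_j.
have t0 : t != 0 by apply: contraNneq mu_j => t0; rewrite mu_t t0 mul0r.
have [i [k [ik mu_i mu_k]]] : exists i k, [/\ i != k, mu i < 0 & mu k < 0].
  case: lam_signs => [[i [k [ik li lk]]] [i' [k' [ik' li' lk']]]].
  case: (ltgtP t 0) => [tn | tp | /eqP]; last by rewrite (negbTE t0).
  - by exists i, k; rewrite !mu_t !nmulr_rlt0.
  - by exists i', k'; rewrite !mu_t !pmulr_rlt0.
case: (eqVneq i l) => [il | il]; last by have := mu_pos i il; rewrite leNgt mu_i.
have kl : k != l by rewrite -il eq_sym.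
by have := mu_pos k kl; rewrite leNgt mu_k.
Qed.

(* The relation (delta_j1 - delta_j2) shows that f is injective. *)
Lemma relation_injective : injective f.
Proof.
move=> j1 j2 f12; apply: contraTeq isT => j12.
pose mu j : R := (j == j1)%:R - (j == j2)%:R.
have rel : \sum_j mu j *: f j = 0.
  by under eq_bigr do rewrite scalerBl; rewrite sumrB !sum_delta f12 subrr.
have mu_pos j : j != j2 -> 0 <= mu j by rewrite /mu => /negbTE ->; rewrite subr0 ler0n.
have := relation_one_negative rel mu_pos j1.
by rewrite /mu eqxx (negbTE j12) subr0 => /eqP; rewrite oner_eq0.
Qed.

Let image := [fset f j | j : 'I_m]%fset.

Let in_image j : f j \in image. Proof. exact: in_imfset. Qed.

Let sum_image (V : zmodType) (G : 'rV[R]_n -> V) :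
  \sum_(a <- image) G a = \sum_j G (f j).
Proof.
rewrite big_imfset /=; last by move=> ? ? _ _; apply: relation_injective.
by rewrite big_enum.
Qed.

Let sum_image_but (V : zmodType) (G : 'rV[R]_n -> V) k :
  \sum_(a <- (image `\ f k)%fset) G a = \sum_(j | j != k) G (f j).
Proof.
apply: (@addrI _ (G (f k))); rewrite -big_fsetD1 ?in_image //.
by rewrite sum_image (bigD1 k).
Qed.

(* Neither 0 in the convex hull nor a point in the positive hull of the
   others gives a relation of the forbidden shape. *)
Lemma image_conical : conical_position image.
Proof.
split.
  case=> c [c_pos [c_sum1 c_sum0]].
  have [[l _] _] := lam_signs.
  have rel : \sum_j c (f j) *: f j = 0 by rewrite -(sum_image (fun a => c a *: a)).
  have c0 := relation_one_negative rel (fun j _ => c_pos _ (in_image j)).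
  move: c_sum1; rewrite sum_image big1 => [/eqP | j _]; last exact: c0.
  by rewrite eq_sym oner_eq0.
move=> _ /imfsetP [k _ ->] [c [c_pos c_sum]].
pose mu j := if j == k then -1 else c (f j).
have rel : \sum_j mu j *: f j = 0.
  rewrite (bigD1 k) //= /mu eqxx scaleN1r -[X in - X + _]c_sum sum_image_but.
  by rewrite addrC; apply/eqP; rewrite subr_eq0; apply/eqP/eq_bigr => j /negbTE ->.
have mu_pos j : j != k -> 0 <= mu j.
  move=> jk; rewrite /mu (negbTE jk); apply: c_pos.
  by rewrite in_fsetD1 (inj_eq relation_injective) jk in_image.
have := relation_one_negative rel mu_pos k.
by rewrite /mu eqxx => /eqP; rewrite oppr_eq0 oner_eq0.
Qed.

End UniqueRelation.

Section Setting.
Variables (R : realType) (n : nat) (e : 'I_n.+1 -> 'rV[R]_n) (X : {fset 'rV[R]_n}).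
Hypothesis setting_eX : setting e X.

Let e_indep : affinely_independent e. Proof. by case: setting_eX => [[]]. Qed.
Let e_sum0 : \sum_(i < n.+1) e i = 0. Proof. by case: setting_eX => [[]]. Qed.
Let e_in_X i : e i \in X. Proof. by case: setting_eX => [[_ _ eX _ _] _]. Qed.

(* n+1 points of X cannot have, up to scaling, a unique linear relation with
   two entries of each sign: they would be in conical position. *)
Lemma unique_relation_not_two_signs (f : 'I_n.+1 -> 'rV[R]_n) (lam : 'I_n.+1 -> R) :
  (forall j, f j \in X) ->
  (forall mu, \sum_j mu j *: f j = 0 -> exists t, forall j, mu j = t * lam j) ->
  ~ two_signs lam.
Proof.
move=> fX f_rel signs; case: setting_eX => _ good.
apply: (good [fset f j | j : 'I_n.+1]%fset).
- by apply/fsubsetP => _ /imfsetP [j _ ->].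
- by rewrite card_imfset ?size_enum_ord //; exact: relation_injective f_rel signs.
- exact: image_conical f_rel signs.
Qed.

Lemma pair_not_two_signs x y cx cy u v :
  x \in X -> y \in X -> x = \sum_i cx i *: e i -> y = \sum_i cy i *: e i ->
  u != v -> cx u != cx v -> ~ two_signs (pair_relation cx cy u v).
Proof.
move=> xX yX xE yE uv cuv.
apply: (unique_relation_not_two_signs (f := pair_family e x y u v)).
  by move=> j; rewrite /pair_family; case: ifP => // _; case: ifP.
by move=> mu; apply: pair_relations.
Qed.

(* No coordinate value of a point of X lies below two others and above a
   third: x together with the vertices other than e_v would be in conical
   position (pair family with y = e_i0, u = i0). *)
Lemma one_below_two_above x c v i0 i1 i2 :
  x \in X -> x = \sum_i c i *: e i ->
  c i0 < c v -> c v < c i1 -> c v < c i2 -> i1 != i2 -> False.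
Proof.
move=> xX xE lt0 lt1 lt2 i12.
have neq i j : c i < c j -> j != i by move=> lt; apply: contraTneq lt => ->; rewrite ltxx.
have v_i0 := neq _ _ lt0; have i1_v := neq _ _ lt1; have i2_v := neq _ _ lt2.
have i1_i0 := neq _ _ (lt_trans lt0 lt1); have i2_i0 := neq _ _ (lt_trans lt0 lt2).
have e_i0 : e i0 = \sum_i (i == i0)%:R *: e i by rewrite sum_delta.
have i0_v : i0 != v by rewrite eq_sym.
apply: (pair_not_two_signs xX (e_in_X i0) xE e_i0 i0_v (negbT (lt_eqF lt0))).
split.
  exists i0, v; rewrite pair_relation_u pair_relation_v //.
  by rewrite eqxx (negbTE v_i0) subr0 ltr01 subr_gt0.
exists i1, i2; rewrite !pair_relation_other // eqxx.
rewrite (negbTE v_i0) (negbTE i1_i0) (negbTE i2_i0) subrr mulr0 !sub0r subr0 !mul1r.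
by rewrite !oppr_lt0 !subr_gt0.
Qed.

Lemma three_above_profile x c b i j k :
  x \in X -> x = \sum_i c i *: e i -> c b < c i -> c b < c j -> c b < c k ->
  j != k -> i != k -> (c k <= c i /\ c k <= c j) \/ (c i = c j /\ c j < c k).
Proof.
move=> xX xE bi bj bk jk ik.
case: (boolP ((c k <= c i) && (c k <= c j))) => [/andP [] | ]; first by left.
rewrite negb_and -!ltNge => /orP below_k; right.
case: (ltgtP (c i) (c j)) => [lt_ij | lt_ji | eq_ij].
- have lt_ik : c i < c k by case: below_k => // /(lt_trans lt_ij).
  by case: (one_below_two_above xX xE bi lt_ij lt_ik jk).
- have lt_jk : c j < c k by case: below_k => // /(lt_trans lt_ji).
  by case: (one_below_two_above xX xE bj lt_ji lt_jk ik).
- by split => //; case: below_k; rewrite ?eq_ij.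
Qed.

Lemma two_point_support_cover p r w w' Sr :
  p \in X -> r \in X -> is_support e p [set w; w'] -> is_support e r Sr ->
  w != w' -> w \in Sr -> w' \notin Sr -> (2 <= #|Sr|)%N -> [set~ w'] \subset Sr.
Proof.
move=> pX rX /support_coordsP [cp [cp_pos cp0 pE]] /support_coordsP [cr [cr_pos cr0 rE]].
move=> ww' wR w'R cardR.
apply/subsetP => u; rewrite !inE => uw'; apply/negPn/negP => uR.
have [t tR tw] := exists_other w cardR.
have uw : u != w by apply: contraNneq uR => ->.
have [tw' tu] : t != w' /\ t != u.
  by split; [apply: contraNneq w'R | apply: contraNneq uR] => <-.
have cpw : 0 < cp w by apply: cp_pos; rewrite !inE eqxx.
have cpw' : 0 < cp w' by apply: cp_pos; rewrite !inE eqxx orbT.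
have cp_off i : i != w -> i != w' -> cp i = 0.
  by move=> iw iw'; apply: cp0; rewrite !inE negb_or iw.
have [crw crt] := (cr_pos w wR, cr_pos t tR).
have cp_wu : cp w != cp u by rewrite (cp_off u) // gt_eqF.
apply: (pair_not_two_signs pX rX pE rE _ cp_wu); first by rewrite eq_sym.
split.
  exists w, t; rewrite pair_relation_u pair_relation_other //.
  rewrite (cr0 u uR) (cp_off u) // (cp_off t) // !subr0 mulr0 subr0.
  by split; rewrite 1?eq_sym // mulr_gt0.
exists u, w'; rewrite pair_relation_v 1?eq_sym // pair_relation_other 1?eq_sym //.
rewrite (cr0 u uR) (cp_off u) // (cr0 w' w'R) !subr0 mulr0 !sub0r.
by split; rewrite // oppr_lt0 // mulr_gt0.
Qed.

Lemma pair_support_not_proper p q r a b Sr :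
  p \in X -> q \in X -> r \in X -> is_support e p [set a; b] ->
  is_support e q [set~ b] -> is_support e r Sr -> a != b -> ~ [set a; b] \proper Sr.
Proof.
move=> pX qX rX /support_coordsP [cp [cp_pos cp0 pE]] /support_coordsP [cq [cq_pos cq0 qE]].
move=> supp_r ab; have SrT := support_proper e_sum0 supp_r.
have [cr [cr_pos cr0 rE]] := support_coordsP supp_r.
case/properP=> abR [t tR]; rewrite !inE negb_or => /andP [ta tb].
have [u _ uR] : exists2 u, u \in setT & u \notin Sr by apply/subsetPn; rewrite subTset.
have [aR bR] : a \in Sr /\ b \in Sr by split; apply: (subsetP abR); rewrite !inE eqxx ?orbT.
have [ua ub tu] : [/\ u != a, u != b & t != u].
  by split; [apply: contraNneq uR => -> | apply: contraNneq uR => -> | apply: contraNneq uR => <-].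
have cq_b : cq b = 0 by apply: cq0; rewrite in_setC1 negbK.
have cq_gt0 i : i != b -> 0 < cq i by move=> ib; apply: cq_pos; rewrite in_setC1.
have cp_off i : i != a -> i != b -> cp i = 0.
  by move=> ia ib; apply: cp0; rewrite !inE negb_or ia.
have [cpa cpb] : 0 < cp a /\ 0 < cp b by split; apply: cp_pos; rewrite !inE eqxx ?orbT.
have [cra crb crt cru] := And4 (cr_pos a aR) (cr_pos b bR) (cr_pos t tR) (cr0 u uR).
have [cqa cqt cqu] := And3 (cq_gt0 a ab) (cq_gt0 t tb) (cq_gt0 u ub).
have [cq_b_a cq_b_t cq_b_u] : [/\ cq b < cq a, cq b < cq t & cq b < cq u] by rewrite cq_b.
have at' : a != t by rewrite eq_sym.
have au : a != u by rewrite eq_sym.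
case: (three_above_profile qX qE cq_b_a cq_b_t cq_b_u tu au).
  case=> le_ua le_ut; have bu : b != u by rewrite eq_sym.
  have cr_bu : cr b != cr u by rewrite cru gt_eqF.
  apply: (pair_not_two_signs rX qX rE qE bu cr_bu); split.
    exists a, t; rewrite !pair_relation_other // cq_b cru; split => //; nra.
  exists b, u; rewrite pair_relation_u pair_relation_v // cq_b cru; split => //; lra.
case=> eq_at lt_tu; have bt : b != t by rewrite eq_sym.
have cp_bt : cp b != cp t by rewrite (cp_off t) // gt_eqF.
apply: (pair_not_two_signs pX qX pE qE bt cp_bt); split.
  have ut : u != t by rewrite eq_sym.
  exists a, u; rewrite !pair_relation_other // cq_b (cp_off t) // (cp_off u) //.
  by split => //; nra.
exists b, t; rewrite pair_relation_u pair_relation_v // cq_b (cp_off t) //; split => //; lra.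
Qed.

End Setting.

Theorem proposition6p10 (R : realType) (n : nat) (e : 'I_n.+1 -> 'rV[R]_n)
  (X : {fset 'rV[R]_n}) (p q r : 'rV[R]_n) (Sp Sq Sr : {set 'I_n.+1}) :
  setting e X ->
  p \in X -> q \in X -> r \in X ->
  is_support e p Sp -> is_support e q Sq -> is_support e r Sr ->
  #|Sp :&: Sq| = 1%N -> #|Sp| = 2%N -> #|Sq| = n ->
  Sr != Sp -> Sr != Sq -> (2 <= #|Sr|)%N ->
  Sr \subset Sq :\: Sp \/ Sr = (Sp :\: Sq) :|: (Sq :\: Sp).
Proof.
move=> st pX qX rX supp_p supp_q supp_r cPQ cP cQ rP rQ cR.
have [a [b [ab SpE SqE]]] := pair_meets_hyperface cPQ cP cQ; subst Sp Sq.
case: (boolP (a \in Sr)) => aR; case: (boolP (b \in Sr)) => bR.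
- (* {a, b} would be properly contained in S_r *)
  case: (pair_support_not_proper st pX qX rX supp_p supp_q supp_r ab).
  by rewrite properEneq eq_sym rP; apply/subsetP => i; rewrite !inE => /orP [] /eqP ->.
- (* S_r would contain, hence equal, E \ {b} = S_q *)
  have cover := two_point_support_cover st pX rX supp_p supp_r ab aR bR cR.
  by case/negP: rQ; rewrite eqEsubset cover subset_setC1.
- (* S_r = E \ {a}, the symmetric difference of S_p and S_q *)
  rewrite setUC in supp_p; have ba : b != a by rewrite eq_sym.
  have cover := two_point_support_cover st pX rX supp_p supp_r ba bR aR cR.
  have -> : Sr = [set~ a] by apply/eqP; rewrite eqEsubset cover subset_setC1.
  right; apply/setP => i; rewrite !inE.
  by case: (eqVneq i a) => [-> | _]; rewrite ?(negbTE ab) //; case: (i == b).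
- left; apply/subsetP => i iR; rewrite !inE negb_or.
  by rewrite (contraNneq _ aR) ?(contraNneq _ bR) // => <-.
Qed.
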